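(* Let $T=(p,q:F\to E)$ be an LR textile system, and let $\Lambda_T$ be its associated 2-graph. Then $T$ is essential if and only if $\Lambda_T$ is essential.
   Context: Directed graph $E=(E^0,E^1,r,s)$ is essential if $r$ and $s$ are onto $E^0$. Textile system $T=(p,q:F\to E)$: graph homomorphisms $p,q$ (commuting with $r,s$) with $f\mapsto(r(f),p(f),s(f),q(f))$ injective on $F^1$. LR: $p$ has unique $r$-path lifting (for $v\in F^0,e\in E^1$ with $p(v)=r(e)$, exactly one $f\in F^1$ with $r(f)=v,p(f)=e$) and $q$ has unique $s$-path lifting (same with $s$). $T$ is essential if $F$ is essential and $p,q$ are surjective (on vertices and edges). A 2-graph $\Lambda$ (category with degree functor $d:\Lambda\to\mathbb N^2$ with unique factorization, $\Lambda^m=d^{-1}(m)$) is essential if $v\Lambda^m$ and $\Lambda^mv$ are nonempty for all vertices $v$ and $m\in\mathbb N^2$. $\Lambda_T$ (a 2-graph when $T$ is LR): vertices $E^0$; color-1 edges $E^1$ with range and source from $E$; color-2 edges $F^0$ with $r(w)=q(w)$, $s(w)=p(w)$; commuting squares $ve\sim e'w$ iff some $f\in F^1$ has $r(f)=v,s(f)=w,p(f)=e,q(f)=e'$; $\Lambda_T^{\varepsilon_1+\varepsilon_2}$ corresponds to $F^1$. *)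

From Stdlib Require Import Arith.

Record graph := Graph {
  vert : Type;
  edge : Type;
  rng : edge -> vert;
  src : edge -> vert }.

Definition graph_essential (G : graph) : Prop :=
  (forall v : vert G, exists e : edge G, rng G e = v) /\
  (forall v : vert G, exists e : edge G, src G e = v).

Record graph_hom (G H : graph) := GraphHom {
  hv : vert G -> vert H;
  he : edge G -> edge H;
  hom_rng : forall e, rng H (he e) = hv (rng G e);
  hom_src : forall e, src H (he e) = hv (src G e) }.
Arguments hv {G H}.
Arguments he {G H}.

Record textile := Textile {
  tE : graph;
  tF : graph;
  tp : graph_hom tF tE;
  tq : graph_hom tF tE;
  t_inj : forall f g : edge tF,
    rng tF f = rng tF g -> he tp f = he tp g ->
    src tF f = src tF g -> he tq f = he tq g -> f = g }.

Definition LR (T : textile) : Prop :=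
  (forall (v : vert (tF T)) (e : edge (tE T)), hv (tp T) v = rng (tE T) e ->
     exists! f : edge (tF T), rng (tF T) f = v /\ he (tp T) f = e) /\
  (forall (v : vert (tF T)) (e : edge (tE T)), hv (tq T) v = src (tE T) e ->
     exists! f : edge (tF T), src (tF T) f = v /\ he (tq T) f = e).

Definition surj {A B : Type} (f : A -> B) : Prop := forall b, exists a, f a = b.

Definition textile_essential (T : textile) : Prop :=
  graph_essential (tF T) /\
  surj (hv (tp T)) /\ surj (he (tp T)) /\
  surj (hv (tq T)) /\ surj (he (tq T)).

(** Lambda_T has vertices E^0, colour-1 edges E^1 (range/source from E),
    colour-2 edges F^0 with r(w) = q(w), s(w) = p(w), and commuting squares
    v e ~ e' w  iff  some f in F^1 has r f = v, s f = w, p f = e, q f = e'.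
    An element of degree (m,n) = m eps_1 + n eps_2 of the 2-graph generated by
    this skeleton and these factorization rules is the same thing as an
    m x n rectangular grid of commuting squares (a coloured-graph morphism
    from the grid Omega_(m,n)); we describe it by:
      a i j   (i <= m, j <= n)   vertex labels in E^0, a 0 0 = range,
                                  a m n = source;
      h i j   (i < m,  j <= n)   colour-1 edge from a (i+1) j to a i j;
      c i j   (i <= m, j < n)    colour-2 edge from a i (j+1) to a i j;
      sq i j  (i < m,  j < n)    the F^1-edge witnessing the commuting square
                                  c i j . h i (j+1) ~ h i j . c (i+1) j. *)
Definition is_rect (T : textile) (m n : nat)
  (a : forall i j : nat, i <= m -> j <= n -> vert (tE T))
  (h : forall i j : nat, i < m -> j <= n -> edge (tE T))
  (c : forall i j : nat, i <= m -> j < n -> vert (tF T))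
  (sq : forall i j : nat, i < m -> j < n -> edge (tF T)) : Prop :=
  (forall i j (Hi : i < m) (Hj : j <= n),
     rng (tE T) (h i j Hi Hj) = a i j (Nat.lt_le_incl _ _ Hi) Hj /\
     src (tE T) (h i j Hi Hj) = a (S i) j Hi Hj) /\
  (forall i j (Hi : i <= m) (Hj : j < n),
     hv (tq T) (c i j Hi Hj) = a i j Hi (Nat.lt_le_incl _ _ Hj) /\
     hv (tp T) (c i j Hi Hj) = a i (S j) Hi Hj) /\
  (forall i j (Hi : i < m) (Hj : j < n),
     rng (tF T) (sq i j Hi Hj) = c i j (Nat.lt_le_incl _ _ Hi) Hj /\
     src (tF T) (sq i j Hi Hj) = c (S i) j Hi Hj /\
     he (tp T) (sq i j Hi Hj) = h i (S j) Hi Hj /\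
     he (tq T) (sq i j Hi Hj) = h i j Hi (Nat.lt_le_incl _ _ Hj)).

Definition vLambda_nonempty (T : textile) (v : vert (tE T)) (m n : nat) : Prop :=
  exists a h c sq, @is_rect T m n a h c sq /\
    a 0 0 (Nat.le_0_l m) (Nat.le_0_l n) = v.

Definition Lambdav_nonempty (T : textile) (v : vert (tE T)) (m n : nat) : Prop :=
  exists a h c sq, @is_rect T m n a h c sq /\
    a m n (Nat.le_refl m) (Nat.le_refl n) = v.

Definition lambdaT_essential (T : textile) : Prop :=
  forall (v : vert (tE T)) (m n : nat),
    vLambda_nonempty T v m n /\ Lambdav_nonempty T v m n.

From Stdlib Require Import Arith Lia.

(* If p lifts edges at their ranges, q is onto on vertices and every vertex of
   E is a range, a rectangle of Λ_T with prescribed top-left corner is built row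
   by row: a colour-2 path along the top, then each row of squares is obtained
   from the row above by choosing any colour-1 edge at its right end and lifting
   leftwards through p.  Rotating by 180 degrees, which exchanges r with s and p
   with q, gives rectangles with prescribed bottom-right corner.  Conversely,
   rectangles of degree ε1 and ε2 show that r, s, p and q are onto E^0, and path
   lifting transfers this to essentiality of F and surjectivity on edges. *)

Definition ncons {A : Type} (x : A) (f : nat -> A) : nat -> A :=
  fun j => match j with 0 => x | S j => f j end.

Definition rev_graph (G : graph) : graph := Graph (vert G) (edge G) (src G) (rng G).

Definition rev_hom {G H : graph} (h : graph_hom G H) :
  graph_hom (rev_graph G) (rev_graph H) :=
  GraphHom (rev_graph G) (rev_graph H) (hv h) (he h) (hom_src _ _ h) (hom_rng _ _ h).

Definition r_lifting {F E : graph} (p : graph_hom F E) : Prop :=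
  forall v e, hv p v = rng E e -> exists f, rng F f = v /\ he p f = e.

Lemma LR_r_lifting (T : textile) :
  LR T -> r_lifting (tp T) /\ r_lifting (rev_hom (tq T)).
Proof.
  intros [Hp Hq]; split; intros v e He.
  - destruct (Hp v e He) as (f & Hf & _); eauto.
  - destruct (Hq v e He) as (f & Hf & _); eauto.
Qed.

Section Grids.

Variables (E F : graph) (p q : graph_hom F E).

(* The data of [is_rect] without the bound proofs: index functions are total on
   [nat] and only constrained within the bounds. *)
Definition c_path (n : nat) (a : nat -> vert E) (c : nat -> vert F) : Prop :=
  forall j, j < n -> hv q (c j) = a j /\ hv p (c j) = a (S j).

Definition square_row (n : nat) (a : nat -> vert E) (c : nat -> vert F)
    (h : nat -> edge E) (a' : nat -> vert E) (c' : nat -> vert F)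
    (sq : nat -> edge F) : Prop :=
  (forall j, j <= n -> rng E (h j) = a j /\ src E (h j) = a' j) /\
  (forall j, j < n -> rng F (sq j) = c j /\ src F (sq j) = c' j /\
                      he p (sq j) = h (S j) /\ he q (sq j) = h j).

Definition is_grid (m n : nat) (A : nat -> nat -> vert E)
    (H : nat -> nat -> edge E) (C : nat -> nat -> vert F)
    (SQ : nat -> nat -> edge F) : Prop :=
  (forall i, i <= m -> c_path n (A i) (C i)) /\
  (forall i, i < m -> square_row n (A i) (C i) (H i) (A (S i)) (C (S i)) (SQ i)).

Lemma square_row_c_path n a c h a' c' sq :
  square_row n a c h a' c' sq -> c_path n a' c'.
Proof.
  intros [Hh Hsq] j Hj; destruct (Hsq j Hj) as (_ & <- & Hp & Hq).
  rewrite <- (hom_src _ _ q), <- (hom_src _ _ p), Hq, Hp.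
  split; apply Hh; lia.
Qed.

Section Construction.

Hypothesis lift_p : r_lifting p.
Hypothesis rng_onto : forall x : vert E, exists e, rng E e = x.
Hypothesis q_onto : surj (hv q).

Lemma c_path_from (v : vert E) n : exists a c, c_path n a c /\ a 0 = v.
Proof.
  revert v; induction n as [|n IH]; intros v; destruct (q_onto v) as [w Hw].
  - exists (fun _ => v), (fun _ => w); split; [intros j Hj; lia | reflexivity].
  - destruct (IH (hv p w)) as (a & c & Hc & Ha).
    exists (ncons v a), (ncons w c); split; [|reflexivity].
    intros [|j] Hj; cbn.
    + split; congruence.
    + apply Hc; lia.
Qed.

Lemma square_row_below n a c :
  c_path n a c -> exists h a' c' sq, square_row n a c h a' c' sq.
Proof.
  revert a c; induction n as [|n IH]; intros a c Hc.
  - destruct (rng_onto (a 0)) as [e He].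
    (* No square is constrained, but [sq] still needs a value in F^1. *)
    destruct (rng_onto (hv p (c 0))) as [e0 He0].
    destruct (lift_p (c 0) e0 (eq_sym He0)) as [f0 _].
    exists (fun _ => e), (fun _ => src E e), c, (fun _ => f0).
    split; intros j Hj; [replace j with 0 by lia; auto | lia].
  - destruct (IH (fun j => a (S j)) (fun j => c (S j))) as (h & a' & c' & sq & Hh & Hsq).
    { intros j Hj; apply Hc; lia. }
    destruct (Hc 0) as [Hq0 Hp0]; [lia|].
    destruct (lift_p (c 0) (h 0)) as (f & Hfr & Hfp).
    { rewrite Hp0; symmetry; apply Hh; lia. }
    exists (ncons (he q f) h), (ncons (src E (he q f)) a'), (ncons (src F f) c'),
      (ncons f sq).
    split; intros [|j] Hj; cbn.
    + rewrite hom_rng, Hfr; auto.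
    + apply Hh; lia.
    + auto.
    + apply Hsq; lia.
Qed.

Lemma grid_below m n a c :
  c_path n a c -> exists A H C SQ, is_grid m n A H C SQ /\ A 0 = a /\ C 0 = c.
Proof.
  revert a c; induction m as [|m IH]; intros a c Hc;
    destruct (square_row_below n a c Hc) as (h & a' & c' & sq & Hrow).
  - exists (fun _ => a), (fun _ => h), (fun _ => c), (fun _ => sq).
    split; [split|auto]; intros i Hi; [exact Hc | lia].
  - destruct (IH a' c' (square_row_c_path _ _ _ _ _ _ _ Hrow))
      as (A & H & C & SQ & [HC HS] & <- & <-).
    exists (ncons a A), (ncons h H), (ncons c C), (ncons sq SQ).
    split; [split|auto]; intros [|k] Hk; cbn; auto; [apply HC | apply HS]; lia.
Qed.

Lemma grid_from (v : vert E) m n :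
  exists A H C SQ, is_grid m n A H C SQ /\ A 0 0 = v.
Proof.
  destruct (c_path_from v n) as (a & c & Hc & Ha).
  destruct (grid_below m n a c Hc) as (A & H & C & SQ & HG & HA & _).
  exists A, H, C, SQ; split; [exact HG | rewrite HA; exact Ha].
Qed.

End Construction.

End Grids.

Arguments c_path {E F} p q n a c.
Arguments square_row {E F} p q n a c h a' c' sq.
Arguments is_grid {E F} p q m n A H C SQ.

Section Reversal.

Variables (E F : graph) (p q : graph_hom F E).

Lemma c_path_reverse n a c :
  c_path (rev_hom q) (rev_hom p) n a c ->
  c_path p q n (fun j => a (n - j)) (fun j => c (n - 1 - j)).
Proof.
  intros Hc j Hj; destruct (Hc (n - 1 - j)) as [Hp Hq]; [lia|]; cbn in *.
  replace (S (n - 1 - j)) with (n - j) in Hq by lia.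
  replace (n - S j) with (n - 1 - j) by lia; auto.
Qed.

Lemma square_row_reverse n a c h a' c' sq :
  square_row (rev_hom q) (rev_hom p) n a c h a' c' sq ->
  square_row p q n (fun j => a' (n - j)) (fun j => c' (n - 1 - j))
    (fun j => h (n - j)) (fun j => a (n - j)) (fun j => c (n - 1 - j))
    (fun j => sq (n - 1 - j)).
Proof.
  intros [Hh Hsq]; split; intros j Hj; cbn in *.
  - destruct (Hh (n - j)) as [Hr Hs]; [lia|]; auto.
  - destruct (Hsq (n - 1 - j)) as (Hr & Hs & Hp & Hq); [lia|].
    replace (S (n - 1 - j)) with (n - j) in Hp by lia.
    replace (n - S j) with (n - 1 - j) by lia; auto.
Qed.

Lemma grid_reverse m n A H C SQ :
  is_grid (rev_hom q) (rev_hom p) m n A H C SQ ->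
  is_grid p q m n (fun i j => A (m - i) (n - j)) (fun i j => H (m - 1 - i) (n - j))
    (fun i j => C (m - i) (n - 1 - j)) (fun i j => SQ (m - 1 - i) (n - 1 - j)).
Proof.
  intros [HC HS]; split; intros i Hi.
  - apply c_path_reverse, HC; lia.
  - pose proof (square_row_reverse _ _ _ _ _ _ _ (HS (m - 1 - i) ltac:(lia))) as Hrow.
    replace (S (m - 1 - i)) with (m - i) in Hrow by lia.
    cbv beta; replace (m - S i) with (m - 1 - i) by lia; exact Hrow.
Qed.

End Reversal.

Section Textile.

Variable T : textile.

Lemma is_rect_of_grid m n A H C SQ :
  is_grid (tp T) (tq T) m n A H C SQ ->
  is_rect T m n (fun i j _ _ => A i j) (fun i j _ _ => H i j)
    (fun i j _ _ => C i j) (fun i j _ _ => SQ i j).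
Proof.
  intros [HC HS]; split; [|split]; intros i j Hi Hj.
  - exact (proj1 (HS i Hi) j Hj).
  - exact (HC i Hi j Hj).
  - exact (proj2 (HS i Hi) j Hj).
Qed.

Lemma vLambda_nonempty_of_lifting :
  r_lifting (tp T) -> (forall x, exists e, rng (tE T) e = x) ->
  surj (hv (tq T)) -> forall v m n, vLambda_nonempty T v m n.
Proof.
  intros lift Er Hq v m n.
  destruct (grid_from _ _ _ _ lift Er Hq v m n) as (A & H & C & SQ & HG & Hv).
  exists (fun i j _ _ => A i j), (fun i j _ _ => H i j),
    (fun i j _ _ => C i j), (fun i j _ _ => SQ i j).
  split; [apply is_rect_of_grid, HG | exact Hv].
Qed.

Lemma Lambdav_nonempty_of_lifting :
  r_lifting (rev_hom (tq T)) -> (forall x, exists e, src (tE T) e = x) ->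
  surj (hv (tp T)) -> forall v m n, Lambdav_nonempty T v m n.
Proof.
  intros lift Es Hp v m n.
  destruct (grid_from _ _ (rev_hom (tq T)) (rev_hom (tp T)) lift Es Hp v m n)
    as (A & H & C & SQ & HG & Hv).
  eexists _, _, _, _; split; [apply is_rect_of_grid, grid_reverse, HG|].
  cbv beta; rewrite !Nat.sub_diag; exact Hv.
Qed.

Lemma textile_essential_iff :
  r_lifting (tp T) -> r_lifting (rev_hom (tq T)) ->
  textile_essential T <->
  graph_essential (tE T) /\ surj (hv (tp T)) /\ surj (hv (tq T)).
Proof.
  intros lift_p lift_q; split.
  - intros ([Fr Fs] & Hpv & _ & Hqv & _).
    split; [split|]; auto; intros x.
    + destruct (Hpv x) as [w <-]; destruct (Fr w) as [f <-].
      exists (he (tp T) f); apply hom_rng.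
    + destruct (Hqv x) as [w <-]; destruct (Fs w) as [f <-].
      exists (he (tq T) f); apply hom_src.
  - intros ([Er Es] & Hpv & Hqv).
    repeat split; auto.
    + intros w; destruct (Er (hv (tp T) w)) as [e He].
      destruct (lift_p w e (eq_sym He)) as (f & Hf & _); eauto.
    + intros w; destruct (Es (hv (tq T) w)) as [e He].
      destruct (lift_q w e (eq_sym He)) as (f & Hf & _); eauto.
    + intros e; destruct (Hpv (rng (tE T) e)) as [w Hw].
      destruct (lift_p w e Hw) as (f & _ & Hf); eauto.
    + intros e; destruct (Hqv (src (tE T) e)) as [w Hw].
      destruct (lift_q w e Hw) as (f & _ & Hf); eauto.
Qed.

Lemma lambdaT_essential_graph_essential :
  lambdaT_essential T -> graph_essential (tE T).
Proof.
  intros HL; split; intros x.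
  - destruct (HL x 1 0) as [(a & h & c & sq & [Hh _] & Ha) _].
    exists (h 0 0 (Nat.lt_0_1) (le_n 0)).
    rewrite (proj1 (Hh 0 0 _ _)), <- Ha; f_equal; apply le_unique.
  - destruct (HL x 1 0) as [_ (a & h & c & sq & [Hh _] & Ha)].
    exists (h 0 0 (Nat.lt_0_1) (le_n 0)).
    rewrite (proj2 (Hh 0 0 _ _)), <- Ha; f_equal; apply le_unique.
Qed.

Lemma lambdaT_essential_vert_onto :
  lambdaT_essential T -> surj (hv (tp T)) /\ surj (hv (tq T)).
Proof.
  intros HL; split; intros x.
  - destruct (HL x 0 1) as [_ (a & h & c & sq & [_ [Hc _]] & Ha)].
    exists (c 0 0 (le_n 0) Nat.lt_0_1).
    rewrite (proj2 (Hc 0 0 _ _)), <- Ha; f_equal; apply le_unique.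
  - destruct (HL x 0 1) as [(a & h & c & sq & [_ [Hc _]] & Ha) _].
    exists (c 0 0 (le_n 0) Nat.lt_0_1).
    rewrite (proj1 (Hc 0 0 _ _)), <- Ha; f_equal; apply le_unique.
Qed.

End Textile.

Theorem proposition4p8 (T : textile) (HLR : LR T) :
  textile_essential T <-> lambdaT_essential T.
Proof.
  destruct (LR_r_lifting T HLR) as [lift_p lift_q].
  rewrite (textile_essential_iff T lift_p lift_q).
  split.
  - intros ([Er Es] & Hp & Hq) v m n; split.
    + exact (vLambda_nonempty_of_lifting T lift_p Er Hq v m n).
    + exact (Lambdav_nonempty_of_lifting T lift_q Es Hp v m n).
  - intros HL; split.
    + exact (lambdaT_essential_graph_essential T HL).
    + exact (lambdaT_essential_vert_onto T HL).
Qed.
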